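(* Let $i\in\omega$ and let $u\le_{\mathrm{lex}}v\le_{\mathrm{lex}}w\le_{\mathrm{lex}}z$ be mutually compatible words in $\Sigma^*$, all of length $i$. 1. If $v\prec w$, then (a) at least one of $u\prec w$ and $u\perp v$ holds, and (b) at least one of $v\prec z$ and $w\perp z$ holds. 2. If $u\perp z$ and $u<_{\mathrm{lex}}v<_{\mathrm{lex}}z$, then at least one of $u\perp v$ and $v\perp z$ holds.
   Context: $\Sigma=\{\mathrm L,\mathrm X,\mathrm R\}$ ordered $\mathrm L<_{\mathrm{lex}}\mathrm X<_{\mathrm{lex}}\mathrm R$; $\Sigma^*$ is the set of finite words over $\Sigma$ (characters indexed from $0$), $\le_{\mathrm{lex}}$ the lexicographic order, $|w|$ the length. For $w,w'\in\Sigma^*$: $w\prec w'$ iff there is $i<\min(|w|,|w'|)$ with $(w_i,w'_i)=(\mathrm L,\mathrm R)$ and $w_j\le_{\mathrm{lex}}w'_j$ for all $j<i$. $w\perp w'$ iff there are $i,j<\min(|w|,|w'|)$ with $w_i<_{\mathrm{lex}}w'_i$ and $w'_j<_{\mathrm{lex}}w_j$. Words $u\le_{\mathrm{lex}}v$ are compatible if there is no $i<\min(|u|,|v|)$ with $(u_i,v_i)=(\mathrm R,\mathrm L)$, and, if there exists $j<\min(|u|,|v|)$ with $(u_j,v_j)=(\mathrm L,\mathrm R)$, then $u\prec v$ and $u\not\perp v$. *)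

From HB Require Import structures.
From mathcomp Require Import all_boot.
Set Implicit Arguments. Unset Strict Implicit. Unset Printing Implicit Defensive.

Inductive letter := L | X | R.

Definition rank (a : letter) : nat := match a with L => 0 | X => 1 | R => 2 end.

Definition letter_eqb (a b : letter) : bool := rank a == rank b.
Lemma letter_eqP : Equality.axiom letter_eqb.
Proof. by case; case; constructor. Qed.
HB.instance Definition _ := hasDecEq.Build letter letter_eqP.

Definition ltl (a b : letter) : bool := rank a < rank b.
Definition lel (a b : letter) : bool := rank a <= rank b.

Definition word := seq letter.

Fixpoint lelex (w w' : word) : bool :=
  match w, w' with
  | [::], _ => true
  | _ :: _, [::] => false
  | a :: s, b :: t => ltl a b || ((a == b) && lelex s t)
  end.

Definition ltlex (w w' : word) : bool := lelex w w' && (w != w').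

Definition prec (w w' : word) : Prop :=
  exists i, i < minn (size w) (size w') /\
    nth L w i = L /\ nth L w' i = R /\
    (forall j, j < i -> lel (nth L w j) (nth L w' j)).

Definition perp (w w' : word) : Prop :=
  exists i j, i < minn (size w) (size w') /\ j < minn (size w) (size w') /\
    ltl (nth L w i) (nth L w' i) /\ ltl (nth L w' j) (nth L w j).

Definition compatible (u v : word) : Prop :=
  lelex u v /\
  (forall i, i < minn (size u) (size v) -> ~ (nth L u i = R /\ nth L v i = L)) /\
  ((exists j, j < minn (size u) (size v) /\ nth L u j = L /\ nth L v j = R) ->
     prec u v /\ ~ perp u v).

From mathcomp Require Import all_boot.

(* Call a word [a] dominated by [b] when [a] is letterwise
   below [b].  Two words of equal length with [a <=lex b] are then either
   equal, or [a] is dominated by [b], or [a ⊥ b]: if [a] is not dominated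
   some letter of [b] is strictly below the one of [a], and if [a <> b] the
   first difference of the lexicographic comparison is a strict increase.
   Domination interacts well with the two relations of the statement:
   - [u ≺ w] is inherited from [v ≺ w] when [u] is dominated by [v], and
     [v ≺ z] is inherited from [v ≺ w] when [w] is dominated by [z], since
     the witness position keeps its letters [L] and [R];
   - domination is transitive, and dominated words are never orthogonal.
   Part 1 applies the trichotomy to the pairs (u, v) and (w, z); part 2
   applies it to (u, v) and (v, z). *)

Definition dominated (a b : word) : Prop :=
  forall j, j < size a -> lel (nth L a j) (nth L b j).

Lemma lel_trans (a b c : letter) : lel a b -> lel b c -> lel a c.
Proof. exact: leq_trans. Qed.

Lemma lel_L (a : letter) : lel a L -> a = L.
Proof. by case: a. Qed.

Lemma lel_R (b : letter) : lel R b -> b = R.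
Proof. by case: b. Qed.

Lemma lelex_neq_lt {a b : word} : size a = size b -> lelex a b -> a <> b ->
  exists2 i, i < size a & ltl (nth L a i) (nth L b i).
Proof.
elim: a b => [|x s IH] [|y t] //= [Est] /orP [lt_xy | /andP [/eqP <- le_st]] neq.
  by exists 0.
have [|k lt_k lt_st] := IH t Est le_st; first by move=> Est'; apply: neq; rewrite Est'.
by exists k.+1.
Qed.

Lemma dominated_or_drop (a b : word) :
  dominated a b \/ exists2 j, j < size a & ltl (nth L b j) (nth L a j).
Proof.
have [dom | /allPn [j]] := boolP (all (fun j => lel (nth L a j) (nth L b j))
                                       (iota 0 (size a))).
  by left=> j lt_j; apply: (allP dom); rewrite mem_iota.
by rewrite mem_iota /lel /ltl -ltnNge => lt_j lt_ba; right; exists j.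
Qed.

Lemma lelex_trichotomy {a b : word} : size a = size b -> lelex a b ->
  [\/ a = b, dominated a b | perp a b].
Proof.
move=> Eab le_ab; have [-> | neq] := eqVneq a b; first exact: Or31.
have [dom | [j lt_j lt_ba]] := dominated_or_drop a b; first exact: Or32.
have [i lt_i lt_ab] := lelex_neq_lt Eab le_ab (elimN eqP neq).
by apply: Or33; exists i, j; rewrite -Eab minnn.
Qed.

Lemma dominated_trans {a b c : word} : size a = size b ->
  dominated a b -> dominated b c -> dominated a c.
Proof.
by move=> Eab dab dbc j lt_j; apply: lel_trans (dab j lt_j) (dbc j _); rewrite -Eab.
Qed.

Lemma dominated_not_perp {a b : word} : dominated a b -> ~ perp a b.
Proof.
move=> dab [_ [j [_ [lt_j [_ lt_ba]]]]].
have /dab : j < size a by apply: leq_trans lt_j (geq_minl _ _).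
by rewrite /lel leqNgt; move: lt_ba => /[swap] /negP.
Qed.

Lemma prec_dominated_l {u v w : word} : size u = size v ->
  dominated u v -> prec v w -> prec u w.
Proof.
move=> Euv duv [k [lt_k [vkL [wkR before]]]].
have lt_ku : k < size u by rewrite Euv; apply: leq_trans lt_k (geq_minl _ _).
exists k; rewrite Euv; split=> //; split; first by apply: lel_L; move: (duv k lt_ku); rewrite vkL.
split=> // j lt_jk; apply: lel_trans (before j lt_jk).
by apply: duv; apply: ltn_trans lt_ku.
Qed.

Lemma prec_dominated_r {v w z : word} : size w = size z ->
  prec v w -> dominated w z -> prec v z.
Proof.
move=> Ewz [k [lt_k [vkL [wkR before]]]] dwz.
have lt_kw : k < size w by apply: leq_trans lt_k (geq_minr _ _).
exists k; rewrite -Ewz; split=> //; split=> //; split; first by apply: lel_R; move: (dwz k lt_kw); rewrite wkR.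
move=> j lt_jk; apply: lel_trans (before j lt_jk) _.
by apply: dwz; apply: ltn_trans lt_kw.
Qed.

Theorem proposition1 (i : nat) (u v w z : word) :
  size u = i -> size v = i -> size w = i -> size z = i ->
  lelex u v -> lelex v w -> lelex w z ->
  compatible u v -> compatible u w -> compatible u z ->
  compatible v w -> compatible v z -> compatible w z ->
  (prec v w -> (prec u w \/ perp u v) /\ (prec v z \/ perp w z)) /\
  (perp u z -> ltlex u v -> ltlex v z -> perp u v \/ perp v z).
Proof.
move=> Su Sv Sw Sz le_uv _ le_wz _ _ _ _ _ _.
have Euv : size u = size v by rewrite Su Sv.
have Evz : size v = size z by rewrite Sv Sz.
have Ewz : size w = size z by rewrite Sw Sz.
split=> [prec_vw | perp_uz /andP [le_uv' neq_uv] /andP [le_vz neq_vz]].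
  split.
  - case: (lelex_trichotomy Euv le_uv) => [-> | duv | ]; [by left | | by right].
    by left; apply: prec_dominated_l duv prec_vw.
  - case: (lelex_trichotomy Ewz le_wz) => [<- | dwz | ]; [by left | | by right].
    by left; apply: prec_dominated_r prec_vw dwz.
case: (lelex_trichotomy Euv le_uv') => [Euv' | duv | ]; [by rewrite Euv' eqxx in neq_uv | | by left].
case: (lelex_trichotomy Evz le_vz) => [Evz' | dvz | ]; [by rewrite Evz' eqxx in neq_vz | | by right].
by case: (dominated_not_perp (dominated_trans Euv duv dvz) perp_uz).
Qed.
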